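(* Let $W^{(1)}$ be a pro-$p$ Coxeter group, $\mathcal O$ its set of orientations, and $\mathfrak A(W^{(1)})$ the group with generators $\{T_w\}_{w\in W^{(1)}}$ and relations $T_{ww'}=T_wT_{w'}$ whenever $\ell(ww')=\ell(w)+\ell(w')$ (notation as in the context). Then there exists a unique map \[ \theta:W^{(1)}\longrightarrow \mathrm{Hom}_{\mathrm{Set}}(\mathcal O,\mathfrak A(W^{(1)})),\qquad w\mapsto(\mathfrak o\mapsto\theta_{\mathfrak o}(w)) \] such that $\theta_{\mathfrak o}(ww')=\theta_{\mathfrak o}(w)\,\theta_{\mathfrak o\bullet w}(w')$ for all $w,w'\in W^{(1)}$ and $\mathfrak o\in\mathcal O$; $\theta_{\mathfrak o}(n_s)=T_{n_s^{\varepsilon}}^{\varepsilon}$ with $\varepsilon=\mathfrak o(1,s)\in\{\pm1\}$ for all $s\in S$ and $\mathfrak o\in\mathcal O$ (i.e. $\theta_{\mathfrak o}(n_s)=T_{n_s}$ if $\varepsilon=1$ and $=T_{n_s^{-1}}^{-1}$ if $\varepsilon=-1$); and $\theta_{\mathfrak o}(u)=T_u$ for all $u\in\Omega^{(1)}$ and $\mathfrak o\in\mathcal O$.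
   Context: Coxeter group $(W_{\mathrm{aff}},S)$ with length $\ell$ and $m(s,t)$ the order of $st$. Extended Coxeter group: $W=W_{\mathrm{aff}}\rtimes\Omega$ with $(W_{\mathrm{aff}},S)$ Coxeter and $\Omega$ preserving $S$ under conjugation; $\ell(wu)=\ell(w)$ for $w\in W_{\mathrm{aff}}$, $u\in\Omega$. Pro-$p$ Coxeter group: extension $1\to T\to W^{(1)}\xrightarrow{\pi}W\to1$, $T$ abelian, with lifts $n_s\in\pi^{-1}(s)$ satisfying the braid relations $n_sn_tn_s\cdots=n_tn_sn_t\cdots$ ($m(s,t)$ factors) when $m(s,t)<\infty$; $\ell$ on $W^{(1)}$ is $\ell\circ\pi$; $\Omega^{(1)}=\pi^{-1}(\Omega)$. Orientations: an orientation of $(W_{\mathrm{aff}},S)$ is a map $\mathfrak o:W_{\mathrm{aff}}\times S\to\{\pm1\}$ with (OR1) $\mathfrak o(ws,s)=-\mathfrak o(w,s)$ and (OR2) for $s,t\in S$ with $m=m(s,t)<\infty$ and $w\in W_{\mathrm{aff}}$, the sequences $(\mathfrak o(w,s),\mathfrak o(ws,t),\mathfrak o(wst,s),\dots)$ and $(\mathfrak o(w,t),\mathfrak o(wt,s),\dots)$ of length $m$ are, for some $0\le k\le m$, either ($k$ pluses then $m-k$ minuses) and ($m-k$ minuses then $k$ pluses), or ($k$ minuses then $m-k$ pluses) and ($m-k$ pluses then $k$ minuses). An orientation of $W$ is a map $W\times S\to\{\pm1\}$ of the form $(wu,s)\mapsto\mathfrak o(w,usu^{-1})$ ($w\in W_{\mathrm{aff}},u\in\Omega$)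 with $\mathfrak o$ an orientation of $W_{\mathrm{aff}}$; an orientation of $W^{(1)}$ is a map $(w,s)\mapsto\mathfrak o(\pi(w),s)$ with $\mathfrak o$ an orientation of $W$. $\mathcal O$ is the set of orientations of $W^{(1)}$, with right $W^{(1)}$-action $(\mathfrak o\bullet w)(w',s)=\mathfrak o(ww',s)$. *)

From Stdlib Require Import List Arith Bool.
Set Implicit Arguments.
Unset Strict Implicit.

Record group := Group {
  gcar :> Type;
  gmul : gcar -> gcar -> gcar;
  gone : gcar;
  ginv : gcar -> gcar;
  gmulA : forall x y z, gmul x (gmul y z) = gmul (gmul x y) z;
  gmul1g : forall x, gmul gone x = x;
  gmulVg : forall x, gmul (ginv x) x = gone }.

Arguments gmul {g} x y.
Arguments gone {g}.
Arguments ginv {g} x.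

Declare Scope grp_scope.
Delimit Scope grp_scope with grp.
Notation "x * y" := (gmul x y) : grp_scope.
Local Open Scope grp_scope.

Fixpoint gpow (G : group) (x : G) (k : nat) : G :=
  match k with O => gone | Datatypes.S k => x * gpow x k end.

Definition prodl (G : group) (l : list G) : G := fold_right (@gmul G) gone l.

Definition is_hom (G H : group) (f : G -> H) : Prop :=
  forall x y, f (x * y) = f x * f y.

Definition order_is (G : group) (x : G) (m : nat) : Prop :=
  0 < m /\ gpow x m = gone /\ forall k, 0 < k -> gpow x k = gone -> m <= k.

Fixpoint alt (X : Type) (a b : X) (k : nat) : list X :=
  match k with O => nil | Datatypes.S k => a :: alt b a k end.

(** * Coxeter systems (W, S): S is given as a type with an injection s into W.
    m(a,b) is the order of s a * s b ("finite" iff order_is holds for some m).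
    Coxeter = the presentation <S | s^2, (st)^m(s,t) for m(s,t) finite>. *)
Definition is_coxeter_system (W : group) (S : Type) (s : S -> W) : Prop :=
  (forall a b, s a = s b -> a = b) /\
  (forall a, s a <> gone /\ s a * s a = gone) /\
  (forall w : W, exists l : list S, w = prodl (map s l)) /\
  (forall (G : group) (f : S -> G),
     (forall a, f a * f a = gone) ->
     (forall a b m, order_is (s a * s b) m -> gpow (f a * f b) m = gone) ->
     exists g : W -> G, is_hom g /\ forall a, g (s a) = f a).

Definition word_length (W : group) (S : Type) (s : S -> W) (w : W) (k : nat) : Prop :=
  (exists l : list S, length l = k /\ prodl (map s l) = w) /\
  (forall l : list S, prodl (map s l) = w -> k <= length l).

(** * Extended Coxeter groups W = W_aff >| Omega.
    W_aff is embedded in W by the injective homomorphism iota. *)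
Definition is_extended_coxeter (Waff : group) (S : Type) (s : S -> Waff)
    (W : group) (iota : Waff -> W) (Omega : W -> Prop) : Prop :=
  is_coxeter_system s /\
  is_hom iota /\ (forall a b, iota a = iota b -> a = b) /\
  Omega gone /\ (forall u v, Omega u -> Omega v -> Omega (u * v)) /\
  (forall u, Omega u -> Omega (ginv u)) /\
  (forall (a : Waff) (w : W), exists b, w * iota a * ginv w = iota b) /\
  (forall w : W, exists a u, Omega u /\ w = iota a * u) /\
  (forall a u a' u', Omega u -> Omega u' -> iota a * u = iota a' * u' ->
       a = a' /\ u = u') /\
  (forall u x, Omega u -> exists y, u * iota (s x) * ginv u = iota (s y)).

Definition lenW (Waff : group) (S : Type) (s : S -> Waff)
    (W : group) (iota : Waff -> W) (Omega : W -> Prop) (w : W) (k : nat) : Prop :=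
  exists a u, Omega u /\ w = iota a * u /\ word_length s a k.

(** * Pro-p Coxeter groups: 1 -> T -> W1 -pi-> W -> 1, T = ker pi abelian,
    lifts n_s of s satisfying the braid relations. *)
Definition is_pro_p_coxeter (Waff : group) (S : Type) (s : S -> Waff)
    (W : group) (iota : Waff -> W) (Omega : W -> Prop)
    (W1 : group) (pi : W1 -> W) (n : S -> W1) : Prop :=
  is_extended_coxeter s iota Omega /\
  is_hom pi /\ (forall w : W, exists w1, pi w1 = w) /\
  (forall x y : W1, pi x = gone -> pi y = gone -> x * y = y * x) /\
  (forall a, pi (n a) = iota (s a)) /\
  (forall a b m, order_is (s a * s b) m ->
     prodl (map n (alt a b m)) = prodl (map n (alt b a m))).

(** * Orientations (sign +1 is [true], -1 is [false]) *)
Definition is_orientation_aff (Waff : group) (S : Type) (s : S -> Waff)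
    (o : Waff -> S -> bool) : Prop :=
  (forall w a, o (w * s a) a = negb (o w a)) /\
  (forall a b m w, order_is (s a * s b) m ->
     let seq1 := fun i => o (w * prodl (map s (alt a b i))) (if Nat.even i then a else b) in
     let seq2 := fun i => o (w * prodl (map s (alt b a i))) (if Nat.even i then b else a) in
     exists k, k <= m /\
       (((forall i, i < m -> seq1 i = (i <? k)) /\
         (forall i, i < m -> seq2 i = negb (i <? m - k)))
        \/
        ((forall i, i < m -> seq1 i = negb (i <? k)) /\
         (forall i, i < m -> seq2 i = (i <? m - k))))).

Definition is_orientation_W (Waff : group) (S : Type) (s : S -> Waff)
    (W : group) (iota : Waff -> W) (Omega : W -> Prop) (O : W -> S -> bool) : Prop :=
  exists o, is_orientation_aff s o /\
    forall a u x y, Omega u -> iota (s y) = u * iota (s x) * ginv u ->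
      O (iota a * u) x = o a y.

Definition is_orientation_W1 (Waff : group) (S : Type) (s : S -> Waff)
    (W : group) (iota : Waff -> W) (Omega : W -> Prop)
    (W1 : group) (pi : W1 -> W) (O1 : W1 -> S -> bool) : Prop :=
  exists O, is_orientation_W s iota Omega O /\ forall w x, O1 w x = O (pi w) x.

Definition orient_act (W1 : group) (S : Type) (o : W1 -> S -> bool) (w : W1)
  : W1 -> S -> bool := fun w' x => o (w * w') x.

(** * The group Aff(W1) = < T_w | T_{ww'} = T_w T_{w'} if ell(ww') = ell(w)+ell(w') >,
    given by its universal property (presentation). *)
Definition aff_rel (Waff : group) (S : Type) (s : S -> Waff)
    (W : group) (iota : Waff -> W) (Omega : W -> Prop)
    (W1 : group) (pi : W1 -> W) (G : group) (f : W1 -> G) : Prop :=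
  forall (w w' : W1) (k l : nat),
    lenW s iota Omega (pi w) k -> lenW s iota Omega (pi w') l ->
    lenW s iota Omega (pi (w * w')) (k + l) ->
    f (w * w') = f w * f w'.

Definition is_Aff_presentation (Waff : group) (S : Type) (s : S -> Waff)
    (W : group) (iota : Waff -> W) (Omega : W -> Prop)
    (W1 : group) (pi : W1 -> W) (A : group) (Tg : W1 -> A) : Prop :=
  aff_rel s iota Omega pi Tg /\
  forall (G : group) (f : W1 -> G), aff_rel s iota Omega pi f ->
    exists g : A -> G, is_hom g /\ (forall w, g (Tg w) = f w) /\
      forall g' : A -> G, is_hom g' -> (forall w, g' (Tg w) = f w) ->
        forall x, g' x = g x.

(** the defining properties of theta (only constrained on orientations) *)
Definition theta_spec (Waff : group) (S : Type) (s : S -> Waff)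
    (W : group) (iota : Waff -> W) (Omega : W -> Prop)
    (W1 : group) (pi : W1 -> W) (n : S -> W1) (A : group) (Tg : W1 -> A)
    (theta : W1 -> (W1 -> S -> bool) -> A) : Prop :=
  (forall (w w' : W1) o, is_orientation_W1 s iota Omega pi o ->
     theta (w * w') o = theta w o * theta w' (orient_act o w)) /\
  (forall x o, is_orientation_W1 s iota Omega pi o ->
     theta (n x) o = if o gone x then Tg (n x) else ginv (Tg (ginv (n x)))) /\
  (forall u o, Omega (pi u) -> is_orientation_W1 s iota Omega pi o ->
     theta u o = Tg u).

(* Write [pi w = iota a * u] with [u] in [Omega] and choose a word [c_1 ... c_k] for [a].
   Walking along this gallery, the orientation [o] yields a sign [e_i] at each step, and the
   three defining properties force
     [theta_o(w) = T^{e_1}_{n_{c_1}^{e_1}} ... T^{e_k}_{n_{c_k}^{e_k}} T_{(n_{c_1}..n_{c_k})^-1 w}];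
   this gives uniqueness, and we take the formula as the definition.
   The formula does not depend on the word: following a word letter by letter defines an
   involution of [A * W_aff] for each generator, and these satisfy the braid relations because,
   by (OR2), the signs along the two sides of a braid relation have the shapes [+..+-..-] and
   [-..-+..+], while alternating words of length at most [m(a,b)] are reduced (Tits' argument
   with the reflection representation), so that the length-additivity relations of [A] make
   both products equal. By the Coxeter presentation they define an action of [W_aff].
   The cocycle relation follows by moving [T_v], [pi v] in [Omega], across such a product:
   this conjugates the letters by [pi v] without changing signs or lengths. *)

From Stdlib Require Import List Bool Lia PeanoNat.
From Stdlib Require Import Classical ClassicalEpsilon FunctionalExtensionality.
Import ListNotations.
Set Implicit Arguments.
Unset Strict Implicit.
Local Open Scope grp_scope.

Section GroupTheory.
Variable G : group.
Implicit Types x y z : G.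

Lemma mulgV x : x * ginv x = gone.
Proof.
  rewrite <- (gmul1g (x * ginv x)), <- (gmulVg (ginv x)) at 1.
  rewrite <- gmulA, (gmulA (ginv x) x), gmulVg, gmul1g. apply gmulVg.
Qed.

Lemma mulg1 x : x * gone = x.
Proof. rewrite <- (gmulVg x), gmulA, mulgV. apply gmul1g. Qed.

Lemma mulgK x y : y * x * ginv x = y.
Proof. rewrite <- gmulA, mulgV. apply mulg1. Qed.

Lemma mulgKV x y : y * ginv x * x = y.
Proof. rewrite <- gmulA, gmulVg. apply mulg1. Qed.

Lemma mulgI x y z : x * y = x * z -> y = z.
Proof.
  intro E. rewrite <- (gmul1g y), <- (gmul1g z), <- (gmulVg x), <- !gmulA, E.
  reflexivity.
Qed.

Lemma mulIg x y z : y * x = z * x -> y = z.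
Proof. intro E. rewrite <- (mulgK x y), E. apply mulgK. Qed.

Lemma invg_uniq x y : x * y = gone -> y = ginv x.
Proof. intro E. apply (mulgI (x := x)). rewrite E. symmetry. apply mulgV. Qed.

Lemma invgK x : ginv (ginv x) = x.
Proof. symmetry. apply invg_uniq, gmulVg. Qed.

Lemma invMg x y : ginv (x * y) = ginv y * ginv x.
Proof.
  symmetry. apply invg_uniq. rewrite <- gmulA, (gmulA y), mulgV, gmul1g. apply mulgV.
Qed.

Lemma invg1 : ginv (gone : G) = gone.
Proof. symmetry. apply invg_uniq, gmul1g. Qed.

Lemma idemg_eq1 x : x * x = x -> x = gone.
Proof. intro E. apply (mulgI (x := x)). rewrite E. symmetry. apply mulg1. Qed.

Lemma invg_involution x : x * x = gone -> ginv x = x.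
Proof. intro E. symmetry. apply invg_uniq, E. Qed.

Lemma mulgV_eq_mulVg (V a b X : G) : V * a = b * X -> a * ginv X = ginv V * b.
Proof.
  intro E. apply (mulgI (x := V)). rewrite gmulA, E, <- gmulA, mulgV, mulg1, gmulA, mulgV.
  symmetry. apply gmul1g.
Qed.

Lemma prodl_app (l1 l2 : list G) : prodl (l1 ++ l2) = prodl l1 * prodl l2.
Proof. induction l1; simpl. symmetry; apply gmul1g. rewrite IHl1. apply gmulA. Qed.

Lemma prodl_rev_involutions (l : list G) : (forall z, In z l -> z * z = gone) ->
  prodl (rev l) = ginv (prodl l).
Proof.
  induction l as [|a l IH]; intros H; simpl. symmetry; apply invg1.
  rewrite prodl_app, IH by (intros; apply H; simpl; auto). simpl.
  rewrite mulg1, (invMg a), (invg_involution (x := a)) by (apply H; simpl; auto).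
  reflexivity.
Qed.

Lemma gpow_commute x k : gpow x k * x = x * gpow x k.
Proof. induction k; simpl. rewrite mulg1; apply gmul1g. rewrite <- gmulA, IHk. reflexivity. Qed.

Lemma gpow_invg x k : gpow (ginv x) k = ginv (gpow x k).
Proof.
  induction k; simpl. symmetry; apply invg1.
  rewrite IHk, <- invMg, gpow_commute. reflexivity.
Qed.

End GroupTheory.

Ltac gsimpl := repeat (progress (rewrite ?invMg, ?invgK, ?invg1, ?gmulA, ?gmul1g, ?mulg1,
  ?gmulVg, ?mulgV, ?mulgK, ?mulgKV)).

Section Homomorphisms.
Variables (G H : group) (f : G -> H).
Hypothesis f_hom : is_hom f.

Lemma hom1 : f gone = gone.
Proof. apply idemg_eq1. rewrite <- f_hom, gmul1g. reflexivity. Qed.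

Lemma homV x : f (ginv x) = ginv (f x).
Proof. apply invg_uniq. rewrite <- f_hom, mulgV. apply hom1. Qed.

Lemma hom_prodl l : f (prodl l) = prodl (map f l).
Proof. induction l; simpl. apply hom1. rewrite f_hom, IHl. reflexivity. Qed.

End Homomorphisms.

(** * Alternating words and dihedral relations *)

Section AlternatingWords.
Variable X : Type.
Implicit Types a b : X.

Definition alt_letter a b (k : nat) : X := if Nat.even k then a else b.

Lemma alt_letter_S a b k : alt_letter a b (S k) = alt_letter b a k.
Proof. unfold alt_letter. rewrite Nat.even_succ, <- Nat.negb_even. now destruct (Nat.even k). Qed.

Lemma length_alt a b k : length (alt a b k) = k.
Proof. revert a b; induction k; intros; simpl; auto. Qed.

Lemma alt_add a b j k :
  alt a b (j + k) = alt a b j ++ alt (alt_letter a b j) (alt_letter b a j) k.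
Proof.
  revert a b; induction j; intros; simpl. reflexivity.
  rewrite IHj, (alt_letter_S a b j), (alt_letter_S b a j). reflexivity.
Qed.

Lemma alt_Sr a b k : alt a b (S k) = alt a b k ++ [alt_letter a b k].
Proof. rewrite <- Nat.add_1_r, alt_add. reflexivity. Qed.

Lemma rev_alt a b m : rev (alt a b m) = alt (alt_letter b a m) (alt_letter a b m) m.
Proof.
  revert a b; induction m; intros. reflexivity.
  rewrite (alt_Sr (alt_letter b a (S m))). simpl. rewrite IHm, !alt_letter_S.
  unfold alt_letter. now destruct (Nat.even m).
Qed.

Lemma rev_alt_app a b j k :
  rev (alt b a j) ++ alt a b k = alt (alt_letter a b j) (alt_letter b a j) (j + k).
Proof.
  revert a b k; induction j; intros; simpl. reflexivity.
  rewrite <- app_assoc. simpl. change (b :: alt a b k) with (alt b a (S k)).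
  rewrite IHj, Nat.add_succ_r, !alt_letter_S. reflexivity.
Qed.

Lemma firstn_alt a b k m : k <= m -> firstn k (alt a b m) = alt a b k.
Proof.
  intro H. replace m with (k + (m - k)) by lia.
  rewrite alt_add, firstn_app, length_alt, Nat.sub_diag, firstn_all2 by (rewrite length_alt; lia).
  apply app_nil_r.
Qed.

Lemma skipn_alt a b k m : k <= m ->
  skipn k (alt a b m) = alt (alt_letter a b k) (alt_letter b a k) (m - k).
Proof.
  intro H. replace m with (k + (m - k)) at 1 by lia.
  rewrite alt_add, skipn_app, length_alt, Nat.sub_diag, skipn_all2 by (rewrite length_alt; lia).
  reflexivity.
Qed.

Lemma map_alt Y (f : X -> Y) a b k : map f (alt a b k) = alt (f a) (f b) k.
Proof. revert a b; induction k; intros; simpl; auto. rewrite IHk; auto. Qed.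

Lemma in_alt a b k z : In z (alt a b k) -> z = a \/ z = b.
Proof.
  revert a b; induction k; intros a b H; simpl in H. contradiction.
  destruct H as [H|H]; auto. apply IHk in H. tauto.
Qed.

End AlternatingWords.

Section DihedralRelations.
Variable G : group.
Implicit Types x y : G.

Lemma prodl_alt_double x y k : prodl (alt x y (k + k)) = gpow (x * y) k.
Proof.
  induction k; simpl. reflexivity.
  rewrite Nat.add_succ_r. simpl. rewrite IHk. apply gmulA.
Qed.

Lemma gpow_eq1_braid x y m : x * x = gone -> y * y = gone ->
  (gpow (x * y) m = gone <-> prodl (alt x y m) = prodl (alt y x m)).
Proof.
  intros Hx Hy.
  assert (Hrev : forall a b, (a = x \/ a = y) -> (b = x \/ b = y) ->
      prodl (rev (alt a b m)) = ginv (prodl (alt a b m))).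
  { intros a b Ha Hb. apply prodl_rev_involutions. intros z Hz. apply in_alt in Hz.
    destruct Hz as [->| ->]; destruct Ha as [->| ->]; auto; destruct Hb as [->| ->]; auto. }
  rewrite <- prodl_alt_double, alt_add, prodl_app.
  replace (alt y x m) with (rev (alt (alt_letter x y m) (alt_letter y x m) m))
    by (rewrite rev_alt; unfold alt_letter; now destruct (Nat.even m)).
  rewrite Hrev by (unfold alt_letter; destruct (Nat.even m); auto).
  split; intro H.
  - apply invg_uniq in H. rewrite H, invgK. reflexivity.
  - rewrite H. apply gmulVg.
Qed.

Lemma order_is_swap x y m : x * x = gone -> y * y = gone ->
  order_is (x * y) m -> order_is (y * x) m.
Proof.
  intros Hx Hy [Hm [Hpow Hmin]].
  replace (y * x) with (ginv (x * y)) by (now rewrite invMg, !invg_involution).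
  split; [exact Hm | split].
  - rewrite gpow_invg, Hpow. apply invg1.
  - intros k Hk Hp. apply Hmin; auto. rewrite gpow_invg in Hp.
    rewrite <- (invgK (gpow (x * y) k)), Hp. apply invg1.
Qed.

End DihedralRelations.

Record perm (X : Type) := Perm {
  perm_fun : X -> X;
  perm_inv : X -> X;
  perm_funK : forall x, perm_fun (perm_inv x) = x;
  perm_invK : forall x, perm_inv (perm_fun x) = x }.

Lemma perm_ext X (p q : perm X) : (forall x, perm_fun p x = perm_fun q x) -> p = q.
Proof.
  intro H. assert (Hf : perm_fun p = perm_fun q) by (apply functional_extensionality; auto).
  assert (Hg : perm_inv p = perm_inv q).
  { apply functional_extensionality. intro x. rewrite <- (perm_funK q x) at 1.
    rewrite <- H. apply perm_invK. }
  destruct p, q; simpl in *. subst. f_equal; apply proof_irrelevance.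
Qed.

Section SymmetricGroup.
Variable X : Type.

Definition perm_mul (p q : perm X) : perm X.
Proof.
  refine (@Perm X (fun x => perm_fun q (perm_fun p x)) (fun x => perm_inv p (perm_inv q x)) _ _);
  intro x; rewrite ?perm_funK, ?perm_invK; reflexivity.
Defined.

Definition perm_one : perm X :=
  @Perm X (fun x => x) (fun x => x) (fun x => eq_refl) (fun x => eq_refl).

Definition perm_invg (p : perm X) : perm X :=
  @Perm X (perm_inv p) (perm_fun p) (perm_invK p) (perm_funK p).

(* Permutations act on the right: [perm_fun (p * q) = perm_fun q \o perm_fun p]. *)
Definition Sym : group.
Proof.
  refine (@Group (perm X) perm_mul perm_one perm_invg _ _ _); intros;
  apply perm_ext; intros; simpl; rewrite ?perm_invK, ?perm_funK; reflexivity.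
Defined.

Definition involution_perm (f : X -> X) (H : forall x, f (f x) = x) : Sym := Perm H H.

Lemma involution_perm_sq f (H : forall x, f (f x) = x) :
  involution_perm H * involution_perm H = gone.
Proof. apply perm_ext. intro x. apply H. Qed.

End SymmetricGroup.

(** * Alternating words of length at most [m(a,b)] are reduced *)

Definition ceqb {X} (x y : X) : bool := if excluded_middle_informative (x = y) then true else false.

Lemma ceqbP X (x y : X) : reflect (x = y) (ceqb x y).
Proof. unfold ceqb. destruct excluded_middle_informative; constructor; auto. Qed.

Definition occ_parity {X} (x : X) (l : list X) : bool :=
  fold_right (fun y acc => xorb (ceqb x y) acc) false l.

Section OccurrenceParity.
Variable X : Type.
Implicit Types (x : X) (l : list X).

Lemma occ_parity_app x l1 l2 :
  occ_parity x (l1 ++ l2) = xorb (occ_parity x l1) (occ_parity x l2).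
Proof. induction l1; simpl; auto. rewrite IHl1. symmetry. apply xorb_assoc. Qed.

Lemma occ_parity_notin x l : ~ In x l -> occ_parity x l = false.
Proof.
  induction l as [|a l IH]; intro H; [reflexivity|]. simpl in *.
  rewrite IH by tauto. destruct (ceqbP x a); [subst; tauto | reflexivity].
Qed.

Lemma occ_parity_in x l : NoDup l -> In x l -> occ_parity x l = true.
Proof.
  induction l as [|a l IH]; intros Hl Hx; simpl in Hx. contradiction.
  inversion Hl; subst. simpl. destruct (ceqbP x a) as [->|Ha].
  - rewrite occ_parity_notin; auto.
  - destruct Hx as [->|Hx]; [congruence|]. rewrite IH; auto.
Qed.

Lemma occ_parity_true_in x l : occ_parity x l = true -> In x l.
Proof. intro H. destruct (classic (In x l)) as [|Hn]; auto. now rewrite occ_parity_notin in H. Qed.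

Lemma occ_parity_map x (f : X -> X) l : (forall y, f (f y) = y) ->
  occ_parity x (map f l) = occ_parity (f x) l.
Proof.
  intro Hf. induction l as [|a l IH]; [reflexivity|]. simpl. rewrite IH. f_equal.
  destruct (ceqbP x (f a)) as [Ex|Hne]; destruct (ceqbP (f x) a) as [Ea|Hne']; auto.
  - subst x. now rewrite Hf in Hne'.
  - subst a. now rewrite Hf in Hne.
Qed.

End OccurrenceParity.

Section CoxeterWords.
Variables (Waff : group) (Sg : Type) (s : Sg -> Waff).
Hypothesis Hcox : is_coxeter_system s.

Definition word_val (L : list Sg) : Waff := prodl (map s L).
Definition reduced (L : list Sg) : Prop := word_length s (word_val L) (length L).

Lemma s_sq a : s a * s a = gone.
Proof. apply Hcox. Qed.

Lemma word_val_nil : word_val [] = gone.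
Proof. reflexivity. Qed.

Lemma word_val_cons a L : word_val (a :: L) = s a * word_val L.
Proof. reflexivity. Qed.

Lemma word_val_app L1 L2 : word_val (L1 ++ L2) = word_val L1 * word_val L2.
Proof. unfold word_val. rewrite map_app. apply prodl_app. Qed.

Lemma word_val_rev L : word_val (rev L) = ginv (word_val L).
Proof.
  unfold word_val. rewrite map_rev. apply prodl_rev_involutions. intros z Hz.
  apply in_map_iff in Hz. destruct Hz as [a [<- _]]. apply s_sq.
Qed.

Lemma word_val_alt_double a b d r :
  word_val (alt a b (d + d + r)) = gpow (s a * s b) d * word_val (alt a b r).
Proof.
  assert (Ev : Nat.even (d + d) = true)
    by (replace (d + d) with (2 * d)%nat by lia; apply Nat.even_mul).
  rewrite alt_add, word_val_app. unfold alt_letter. rewrite Ev. f_equal.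
  unfold word_val. rewrite map_alt. apply prodl_alt_double.
Qed.

Lemma word_val_braid a b m : order_is (s a * s b) m ->
  word_val (alt a b m) = word_val (alt b a m).
Proof.
  intros [_ [H _]]. unfold word_val. rewrite !map_alt. apply gpow_eq1_braid; auto; apply s_sq.
Qed.

Lemma word_val_surj (x : Waff) : exists L, word_val L = x.
Proof. destruct Hcox as [_ [_ [H _]]]. destruct (H x) as [l El]. now exists l. Qed.

Lemma hom_word_val (G : group) (g : Waff -> G) (f : Sg -> G) :
  is_hom g -> (forall a, g (s a) = f a) -> forall L, g (word_val L) = prodl (map f L).
Proof.
  intros Hg Hs L. unfold word_val. rewrite hom_prodl, map_map by exact Hg.
  f_equal. now apply map_ext.
Qed.

Definition sconj a (y : Waff) : Waff := s a * y * s a.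

Lemma sconjK a y : sconj a (sconj a y) = y.
Proof. unfold sconj. rewrite !gmulA, s_sq, gmul1g, <- gmulA, s_sq. apply mulg1. Qed.

(* The reflections [t_i = s_1 ... s_{i-1} s_i s_{i-1} ... s_1] crossed by the word [s_1 ... s_k]. *)
Fixpoint reflections (L : list Sg) : list Waff :=
  match L with [] => [] | a :: L => s a :: map (sconj a) (reflections L) end.

Lemma length_reflections L : length (reflections L) = length L.
Proof. induction L; simpl; auto. rewrite length_map; auto. Qed.

(* Tits' reflection representation of [W_aff] on [W_aff * bool]. *)
Definition refl_step a (xe : Waff * bool) : Waff * bool :=
  (sconj a (fst xe), xorb (snd xe) (ceqb (fst xe) (s a))).

Lemma refl_stepK a xe : refl_step a (refl_step a xe) = xe.
Proof.
  destruct xe as [x e]. unfold refl_step; simpl. rewrite sconjK. f_equal.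
  assert (Hsa : sconj a (s a) = s a) by (unfold sconj; now rewrite <- gmulA, s_sq, mulg1).
  destruct (ceqbP x (s a)) as [->|Hx]; rewrite ?Hsa.
  - destruct (ceqbP (s a) (s a)); [|congruence]. now destruct e.
  - destruct (ceqbP (sconj a x) (s a)) as [Ex|]; [|now destruct e].
    rewrite <- Hsa in Ex. apply (f_equal (sconj a)) in Ex. rewrite !sconjK in Ex. congruence.
Qed.

Definition refl_perm a : Sym (Waff * bool) := involution_perm (refl_stepK a).

Lemma refl_perm_word L x e :
  perm_fun (prodl (map refl_perm L)) (x, e) =
  (ginv (word_val L) * x * word_val L, xorb e (occ_parity x (reflections L))).
Proof.
  revert x e; induction L as [|a L IH]; intros x e; simpl.
  - rewrite word_val_nil, invg1, gmul1g, mulg1, xorb_false_r. reflexivity.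
  - unfold refl_step. simpl. rewrite IH, word_val_cons, occ_parity_map by apply sconjK.
    f_equal.
    + unfold sconj. rewrite invMg, (invg_involution (s_sq a)). gsimpl. reflexivity.
    + apply xorb_assoc.
Qed.

Definition alt_reflection a b (k : nat) : Waff := word_val (alt a b (k + k + 1)).

Lemma reflections_alt a b j : reflections (alt a b j) = map (alt_reflection a b) (seq 0 j).
Proof.
  revert a b; induction j; intros a b; [reflexivity|].
  change (reflections (alt a b (S j))) with (s a :: map (sconj a) (reflections (alt b a j))).
  rewrite IHj. simpl seq. simpl map. f_equal.
  - unfold alt_reflection, word_val. simpl. symmetry. apply mulg1.
  - rewrite <- seq_shift, !map_map. apply map_ext. intro k. unfold alt_reflection, sconj.
    replace (S k + S k + 1) with (S (S (k + k + 1))) by lia.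
    rewrite alt_Sr. change (alt a b (S (k + k + 1))) with (a :: alt b a (k + k + 1)).
    replace (alt_letter a b (S (k + k + 1))) with a.
    + rewrite <- app_comm_cons, word_val_cons, word_val_app. unfold word_val at 3. simpl.
      rewrite mulg1, gmulA. reflexivity.
    + unfold alt_letter. replace (S (k + k + 1)) with (2 * S k)%nat by lia.
      now rewrite Nat.even_mul.
Qed.

Lemma alt_reflection_period a b m k : gpow (s a * s b) m = gone ->
  alt_reflection a b (k + m) = alt_reflection a b k.
Proof.
  intro H. unfold alt_reflection.
  replace (k + m + (k + m) + 1) with (m + m + (k + k + 1)) by lia.
  rewrite word_val_alt_double, H. apply gmul1g.
Qed.

Lemma alt_reflection_inj a b m k k' : order_is (s a * s b) m -> k < m -> k' < m ->
  alt_reflection a b k = alt_reflection a b k' -> k = k'.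
Proof.
  intros [_ [_ Hmin]] Hk Hk' E.
  assert (Hlt : forall i j, i < j -> j < m -> alt_reflection a b i <> alt_reflection a b j).
  { intros i j Hij Hj E'. unfold alt_reflection in E'.
    replace (j + j + 1) with ((j - i) + (j - i) + (i + i + 1)) in E' by lia.
    rewrite (word_val_alt_double a b (j - i)) in E'.
    rewrite <- (gmul1g (word_val (alt a b (i + i + 1)))) in E' at 1.
    apply mulIg in E'. symmetry in E'. apply Hmin in E'; lia. }
  destruct (Nat.lt_trichotomy k k') as [L|[L|L]]; auto; exfalso; eapply Hlt; eauto.
Qed.

Lemma NoDup_reflections_alt a b m j : order_is (s a * s b) m -> j <= m ->
  NoDup (reflections (alt a b j)).
Proof.
  intros Ho Hj. rewrite reflections_alt. apply NoDup_map_NoDup_ForallPairs; [|apply seq_NoDup].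
  intros x y Hx Hy E. apply in_seq in Hx. apply in_seq in Hy.
  eapply alt_reflection_inj; eauto; lia.
Qed.

(* Over a full period [2m] each reflection of the dihedral subgroup is crossed exactly twice. *)
Lemma occ_parity_reflections_alt_period a b m x : gpow (s a * s b) m = gone ->
  occ_parity x (reflections (alt a b (m + m))) = false.
Proof.
  intro H. rewrite reflections_alt, seq_app, map_app, occ_parity_app.
  assert (Hshift : forall len st,
      map (alt_reflection a b) (seq (st + m) len) = map (alt_reflection a b) (seq st len)).
  { induction len; intros st; simpl; auto. rewrite alt_reflection_period by exact H.
    f_equal. replace (S (st + m)) with (S st + m) by lia. apply IHlen. }
  rewrite <- (Hshift m 0). apply xorb_nilpotent.
Qed.

Lemma refl_rep : exists g : Waff -> Sym (Waff * bool), is_hom g /\ forall a, g (s a) = refl_perm a.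
Proof.
  destruct Hcox as [_ [_ [_ U]]]. apply U.
  - intro a. apply involution_perm_sq.
  - intros a b m [_ [Hm _]]. apply perm_ext. intros [x e].
    rewrite <- prodl_alt_double, <- (map_alt refl_perm), refl_perm_word.
    rewrite occ_parity_reflections_alt_period by exact Hm.
    replace (m + m) with (m + m + 0) by lia. rewrite word_val_alt_double, Hm.
    simpl. rewrite word_val_nil, xorb_false_r. gsimpl. reflexivity.
Qed.

Lemma occ_parity_reflections_word_val L1 L2 : word_val L1 = word_val L2 ->
  forall x, occ_parity x (reflections L1) = occ_parity x (reflections L2).
Proof.
  intros E x. destruct refl_rep as [g [Hg Hs]].
  pose proof (f_equal (fun p => snd (perm_fun p (x, false))) (f_equal g E)) as Q. simpl in Q.
  now rewrite !(hom_word_val Hg Hs), !refl_perm_word in Q.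
Qed.

Lemma reduced_alt a b m j : order_is (s a * s b) m -> j <= m -> reduced (alt a b j).
Proof.
  intros Ho Hj. unfold reduced. rewrite length_alt. split.
  - exists (alt a b j). split; auto. apply length_alt.
  - intros L EL. rewrite <- (length_alt a b j), <- (length_reflections (alt a b j)),
      <- (length_reflections L).
    apply NoDup_incl_length; [eapply NoDup_reflections_alt; eauto|].
    intros x Hx. apply occ_parity_true_in. rewrite (occ_parity_reflections_word_val EL).
    apply occ_parity_in; auto. eapply NoDup_reflections_alt; eauto.
Qed.

Lemma reduced_cons_inv a L : reduced (a :: L) -> reduced L.
Proof.
  intros [_ Hmin]. split; [now exists L|].
  intros l El. enough (length (a :: L) <= length (a :: l)) by (simpl in *; lia).
  apply Hmin. change (word_val (a :: l) = word_val (a :: L)).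
  rewrite !word_val_cons. f_equal. exact El.
Qed.

Lemma reduced_rev L : reduced L -> reduced (rev L).
Proof.
  intros [_ Hmin]. split; [now exists (rev L)|].
  intros l El. rewrite length_rev, <- (length_rev l). apply Hmin.
  change (word_val (rev l) = word_val L).
  rewrite word_val_rev. change (prodl (map s l)) with (word_val l) in El.
  rewrite El, word_val_rev. apply invgK.
Qed.

Lemma word_length_s a : word_length s (s a) 1.
Proof.
  split; [exists [a]; split; [reflexivity | apply mulg1]|].
  intros [|b l] E; simpl; [|lia].
  destruct Hcox as [_ [Hs _]]. exfalso. apply (proj1 (Hs a)). now rewrite <- E.
Qed.

Lemma word_length_1 : word_length s gone 0.
Proof. split; [now exists []|]. intros; lia. Qed.

End CoxeterWords.

Section ProPCoxeter.
Variables (Waff W W1 : group) (Sg : Type) (s : Sg -> Waff) (iota : Waff -> W)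
  (Omega : W -> Prop) (pi : W1 -> W) (n : Sg -> W1) (A : group) (Tg : W1 -> A).
Hypothesis Hpro : is_pro_p_coxeter s iota Omega pi n.
Hypothesis HA : is_Aff_presentation s iota Omega pi Tg.

Let Hcox : is_coxeter_system s. Proof. apply Hpro. Qed.
Let iota_hom : is_hom iota. Proof. apply Hpro. Qed.
Let pi_hom : is_hom pi. Proof. apply Hpro. Qed.
Let Tg_aff : aff_rel s iota Omega pi Tg. Proof. apply HA. Qed.

Lemma iota_inj a b : iota a = iota b -> a = b.
Proof. apply Hpro. Qed.
Lemma s_inj a b : s a = s b -> a = b.
Proof. apply Hcox. Qed.
Lemma Omega1 : Omega gone.
Proof. apply Hpro. Qed.
Lemma OmegaM u v : Omega u -> Omega v -> Omega (u * v).
Proof. apply Hpro. Qed.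
Lemma OmegaV u : Omega u -> Omega (ginv u).
Proof. apply Hpro. Qed.
Lemma Omega_decomp (w : W) : exists a u, Omega u /\ w = iota a * u.
Proof. apply Hpro. Qed.
Lemma Omega_decomp_uniq a u a' u' : Omega u -> Omega u' ->
  iota a * u = iota a' * u' -> a = a' /\ u = u'.
Proof. apply Hpro. Qed.
Lemma Omega_conj_s u x : Omega u -> exists y, u * iota (s x) * ginv u = iota (s y).
Proof. apply Hpro. Qed.
Lemma pi_surj (w : W) : exists w1, pi w1 = w.
Proof. apply Hpro. Qed.
Lemma pi_n a : pi (n a) = iota (s a).
Proof. apply Hpro. Qed.
Lemma n_braid a b m : order_is (s a * s b) m ->
  prodl (map n (alt a b m)) = prodl (map n (alt b a m)).
Proof. apply Hpro. Qed.

Lemma pi_mul x y : pi (x * y) = pi x * pi y.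
Proof. apply pi_hom. Qed.
Lemma pi_inv x : pi (ginv x) = ginv (pi x).
Proof. apply homV, pi_hom. Qed.
Lemma pi_one : pi gone = gone.
Proof. apply hom1, pi_hom. Qed.
Lemma iota_mul x y : iota (x * y) = iota x * iota y.
Proof. apply iota_hom. Qed.
Lemma iota_inv x : iota (ginv x) = ginv (iota x).
Proof. apply homV, iota_hom. Qed.
Lemma iota_one : iota gone = gone.
Proof. apply hom1, iota_hom. Qed.

Lemma iota_s_inv a : ginv (iota (s a)) = iota (s a).
Proof. now rewrite <- iota_inv, (invg_involution (s_sq Hcox a)). Qed.

Definition conj_gen (u : W) (x : Sg) : Sg :=
  epsilon (inhabits x) (fun y => iota (s y) = u * iota (s x) * ginv u).

Lemma iota_s_conj_gen u x : Omega u -> iota (s (conj_gen u x)) = u * iota (s x) * ginv u.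
Proof.
  intro Hu. unfold conj_gen. apply (epsilon_spec (inhabits x) (fun y => iota (s y) = _)).
  destruct (Omega_conj_s x Hu) as [y Hy]. now exists y.
Qed.

Definition lift_word (L : list Sg) : W1 := prodl (map n L).

Lemma lift_word_nil : lift_word [] = gone.
Proof. reflexivity. Qed.
Lemma lift_word_cons c L : lift_word (c :: L) = n c * lift_word L.
Proof. reflexivity. Qed.
Lemma lift_word_app L1 L2 : lift_word (L1 ++ L2) = lift_word L1 * lift_word L2.
Proof. unfold lift_word. rewrite map_app. apply prodl_app. Qed.

Lemma pi_lift_word L : pi (lift_word L) = iota (word_val s L).
Proof.
  induction L as [|c L IH].
  - now rewrite lift_word_nil, word_val_nil, pi_one, iota_one.
  - now rewrite lift_word_cons, pi_mul, IH, pi_n, word_val_cons, iota_mul.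
Qed.

Lemma pi_lift_word_inv L : pi (ginv (lift_word L)) = iota (word_val s (rev L)).
Proof. now rewrite pi_inv, pi_lift_word, word_val_rev, iota_inv. Qed.

Ltac pisimpl := repeat (progress (rewrite ?pi_mul, ?pi_inv, ?pi_one, ?pi_lift_word, ?pi_n,
  ?iota_mul, ?iota_inv, ?iota_one)).

Lemma word_length_exists (x : Waff) : exists k, word_length s x k.
Proof.
  destruct (word_val_surj Hcox x) as [L EL].
  enough (H : forall k l, length l <= k -> word_val s l = x -> exists k', word_length s x k')
    by exact (H _ L (le_n _) EL).
  induction k as [|k IH]; intros l Hl El.
  - exists 0. split; [exists l; split; [lia | exact El] | intros; lia].
  - destruct (classic (forall l', prodl (map s l') = x -> length l <= length l')) as [Hmin|Hn].
    + exists (length l). split; [exists l; split; [reflexivity | exact El] | exact Hmin].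
    + apply not_all_ex_not in Hn. destruct Hn as [l' Hl'].
      apply (IH l'); [|tauto]. apply imply_to_and in Hl'. lia.
Qed.

Lemma lenW_iota_Omega c u k : Omega u -> word_length s c k -> lenW s iota Omega (iota c * u) k.
Proof. intros Hu Hc. now exists c, u. Qed.

Lemma lenW_iota c k : word_length s c k -> lenW s iota Omega (iota c) k.
Proof. intro H. rewrite <- (mulg1 (iota c)). apply lenW_iota_Omega; auto. apply Omega1. Qed.

Lemma lenW_Omega u : Omega u -> lenW s iota Omega u 0.
Proof.
  intro H. rewrite <- (gmul1g u), <- iota_one. apply lenW_iota_Omega; auto. apply word_length_1.
Qed.

Lemma iota_word_val_conj_gen u L : Omega u ->
  iota (word_val s (map (conj_gen u) L)) = u * iota (word_val s L) * ginv u.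
Proof.
  intro Hu. induction L as [|x L IH]; simpl map.
  - rewrite !word_val_nil, iota_one. gsimpl. reflexivity.
  - rewrite !word_val_cons, !iota_mul, IH, iota_s_conj_gen by exact Hu. gsimpl. reflexivity.
Qed.

Lemma word_length_conj u a k : Omega u -> word_length s a k ->
  exists a', iota a' = u * iota a * ginv u /\ word_length s a' k.
Proof.
  intros Hu [[L [HL EL]] Hmin]. exists (word_val s (map (conj_gen u) L)).
  split; [rewrite iota_word_val_conj_gen by exact Hu; now rewrite <- EL|].
  split; [exists (map (conj_gen u) L); now rewrite length_map|].
  intros l El. rewrite <- (length_map (conj_gen (ginv u)) l). apply Hmin.
  apply iota_inj. change (iota (word_val s (map (conj_gen (ginv u)) l)) = iota a).
  rewrite iota_word_val_conj_gen by now apply OmegaV.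
  change (prodl (map s l)) with (word_val s l) in El.
  rewrite El, iota_word_val_conj_gen, <- EL by exact Hu. gsimpl. reflexivity.
Qed.

Lemma lenW_Omega_mul u w k : Omega u -> lenW s iota Omega w k -> lenW s iota Omega (u * w) k.
Proof.
  intros Hu [a [u' [Hu' [-> Ha]]]]. destruct (word_length_conj Hu Ha) as [a' [Ea' Ha']].
  exists a', (u * u'). split; [now apply OmegaM|]. split; [|exact Ha'].
  rewrite Ea'. gsimpl. reflexivity.
Qed.

Lemma lenW_mul_Omega w u k : lenW s iota Omega w k -> Omega u -> lenW s iota Omega (w * u) k.
Proof.
  intros [a [u' [Hu' [-> Ha]]]] Hu. exists a, (u' * u).
  split; [now apply OmegaM|]. split; [|exact Ha]. apply eq_sym, gmulA.
Qed.

Lemma lenW_exists (w : W) : exists k, lenW s iota Omega w k.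
Proof.
  destruct (Omega_decomp w) as [a [u [Hu ->]]]. destruct (word_length_exists a) as [k Hk].
  exists k. now apply lenW_iota_Omega.
Qed.

Lemma lenW_reduced L k : reduced s L -> length L = k ->
  lenW s iota Omega (iota (word_val s L)) k.
Proof. intros H <-. now apply lenW_iota. Qed.

Lemma lenW_lift_word L k : reduced s L -> length L = k ->
  lenW s iota Omega (pi (lift_word L)) k.
Proof. rewrite pi_lift_word. apply lenW_reduced. Qed.

Lemma lenW_lift_word_inv L k : reduced s L -> length L = k ->
  lenW s iota Omega (pi (ginv (lift_word L))) k.
Proof.
  intros H HL. rewrite pi_lift_word_inv. apply lenW_reduced.
  - now apply reduced_rev.
  - now rewrite length_rev.
Qed.

Lemma lenW_n c : lenW s iota Omega (pi (n c)) 1.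
Proof. rewrite pi_n. apply lenW_iota, word_length_s, Hcox. Qed.

Lemma lenW_n_inv c : lenW s iota Omega (pi (ginv (n c))) 1.
Proof. rewrite pi_inv, pi_n, iota_s_inv. apply lenW_iota, word_length_s, Hcox. Qed.

Lemma Tg_mul_Omegar w u : Omega (pi u) -> Tg (w * u) = Tg w * Tg u.
Proof.
  intro Hu. destruct (lenW_exists (pi w)) as [k Hk].
  apply (Tg_aff (k := k) (l := 0)); auto.
  - now apply lenW_Omega.
  - rewrite pi_mul, Nat.add_0_r. now apply lenW_mul_Omega.
Qed.

Lemma Tg_mul_Omegal u w : Omega (pi u) -> Tg (u * w) = Tg u * Tg w.
Proof.
  intro Hu. destruct (lenW_exists (pi w)) as [k Hk].
  apply (Tg_aff (k := 0) (l := k)); auto.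
  - now apply lenW_Omega.
  - rewrite pi_mul. now apply lenW_Omega_mul.
Qed.

Lemma Omega_pi_ker t : pi t = gone -> Omega (pi t).
Proof. intros ->. apply Omega1. Qed.

Lemma Tg1 : Tg gone = gone.
Proof.
  apply idemg_eq1. rewrite <- Tg_mul_Omegar, gmul1g; [reflexivity|].
  apply Omega_pi_ker, pi_one.
Qed.

(** * Signed products along galleries *)

Definition T_sign (e : bool) (c : Sg) : A :=
  if e then Tg (n c) else ginv (Tg (ginv (n c))).

Fixpoint theta_word (o : W1 -> Sg -> bool) (L : list Sg) : A :=
  match L with
  | [] => gone
  | c :: L => T_sign (o gone c) c * theta_word (orient_act o (n c)) L
  end.

Fixpoint signed_word (f : nat -> bool) (L : list Sg) : A :=
  match L with
  | [] => gone
  | c :: L => T_sign (f 0) c * signed_word (fun i => f (S i)) L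
  end.

Definition T_word (e : bool) (L : list Sg) : A := prodl (map (T_sign e) L).

Lemma signed_word_ext f g L : (forall i, i < length L -> f i = g i) ->
  signed_word f L = signed_word g L.
Proof.
  revert f g; induction L; intros f g H; simpl; auto. rewrite H by (simpl; lia). f_equal.
  apply IHL. intros i Hi. apply H. simpl; lia.
Qed.

Lemma signed_word_const e L :
  signed_word (fun _ => e) L = T_word e L.
Proof. unfold T_word. induction L; simpl; congruence. Qed.

Lemma signed_word_split f L k (F : bool -> bool) :
  (forall i, i < length L -> f i = F (i <? k)) ->
  signed_word f L =
  T_word (F true) (firstn k L) * T_word (F false) (skipn k L).
Proof.
  revert f k; induction L as [|c L IH]; intros f k H.
  - simpl. rewrite firstn_nil, skipn_nil. symmetry. apply gmul1g.
  - simpl. rewrite (H 0) by (simpl; lia). destruct k as [|k]; simpl.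
    + rewrite gmul1g, <- signed_word_const. simpl. f_equal. apply signed_word_ext.
      intros i Hi. rewrite H by (simpl; lia). reflexivity.
    + unfold T_word at 1. simpl. rewrite (IH _ k), gmulA; [reflexivity|].
      intros i Hi. rewrite H by (simpl; lia). reflexivity.
Qed.

Lemma T_word_true_reduced L : reduced s L -> T_word true L = Tg (lift_word L).
Proof.
  unfold T_word. induction L as [|c L IH]; intro H; simpl.
  - symmetry. apply Tg1.
  - pose proof (reduced_cons_inv H) as HL. rewrite IH, lift_word_cons by exact HL.
    symmetry. apply (Tg_aff (k := 1) (l := length L)).
    + apply lenW_n.
    + now apply lenW_lift_word.
    + rewrite <- lift_word_cons. now apply lenW_lift_word.
Qed.

Lemma T_word_false_reduced L : reduced s L ->
  T_word false L = ginv (Tg (ginv (lift_word L))).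
Proof.
  unfold T_word. induction L as [|c L IH]; intro H; simpl.
  - rewrite lift_word_nil, invg1, Tg1. symmetry. apply invg1.
  - pose proof (reduced_cons_inv H) as HL. rewrite IH, lift_word_cons by exact HL.
    rewrite (invMg (n c)), (Tg_aff (k := length L) (l := 1)), invMg; [reflexivity| | |].
    + now apply lenW_lift_word_inv.
    + apply lenW_n_inv.
    + rewrite <- invMg, <- lift_word_cons.
      apply lenW_lift_word_inv; simpl; [assumption | lia].
Qed.

Lemma reduced_alt_both a b m j : order_is (s a * s b) m -> j <= m ->
  reduced s (alt a b j) /\ reduced s (alt b a j).
Proof.
  intros Ho Hj. split; eapply reduced_alt; eauto.
  apply order_is_swap; auto; apply (s_sq Hcox).
Qed.

Lemma reduced_alt_letter a b m k j : order_is (s a * s b) m -> j <= m ->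
  reduced s (alt (alt_letter a b k) (alt_letter b a k) j).
Proof. intros Ho Hj. unfold alt_letter. destruct (Nat.even k); now apply (reduced_alt_both Ho). Qed.

(* Both sides reduce to [T_{P2^-1 P1} = T_{Q2 Q1^-1}], where [P1 Q1 = P2 Q2] are the two
   splittings of the lifted braid word; all four pieces and [P2^-1 P1] are reduced. *)
Lemma T_word_braid a b m k : order_is (s a * s b) m -> k <= m ->
  T_word true (firstn k (alt a b m)) * T_word false (skipn k (alt a b m)) =
  T_word false (firstn (m - k) (alt b a m)) * T_word true (skipn (m - k) (alt b a m)).
Proof.
  intros Ho Hk.
  rewrite !firstn_alt, !skipn_alt by lia.
  set (P1 := alt a b k). set (Q1 := alt (alt_letter a b k) (alt_letter b a k) (m - k)).
  set (P2 := alt b a (m - k)).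
  set (Q2 := alt (alt_letter b a (m - k)) (alt_letter a b (m - k)) (m - (m - k))).
  assert (RP1 : reduced s P1) by (apply (reduced_alt_both Ho); lia).
  assert (RP2 : reduced s P2) by (apply (reduced_alt_both Ho); lia).
  assert (Hob : order_is (s b * s a) m) by (apply order_is_swap; auto; apply (s_sq Hcox)).
  assert (RQ1 : reduced s Q1) by (eapply reduced_alt_letter; [exact Ho | lia]).
  assert (RQ2 : reduced s Q2) by (eapply reduced_alt_letter; [exact Hob | lia]).
  rewrite !T_word_true_reduced, !T_word_false_reduced by assumption.
  assert (Hsplit : lift_word P1 * lift_word Q1 = lift_word P2 * lift_word Q2).
  { rewrite <- !lift_word_app. unfold P1, Q1, P2, Q2. rewrite <- !alt_add.
    replace (m - k + (m - (m - k))) with m by lia. replace (k + (m - k)) with m by lia.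
    now apply n_braid. }
  assert (Hmid : ginv (lift_word P2) * lift_word P1 = lift_word Q2 * ginv (lift_word Q1)).
  { apply (mulgI (x := lift_word P2)). rewrite gmulA, mulgV, gmul1g, gmulA, <- Hsplit.
    symmetry. apply mulgK. }
  assert (Hlen : lenW s iota Omega (pi (ginv (lift_word P2) * lift_word P1)) (m - k + k)).
  { rewrite pi_mul, pi_lift_word_inv, pi_lift_word, <- iota_mul, <- word_val_app.
    unfold P1, P2. rewrite rev_alt_app. apply lenW_reduced; [|apply length_alt].
    eapply reduced_alt_letter; [exact Ho | lia]. }
  apply mulgV_eq_mulVg.
  rewrite <- (Tg_aff (k := m - k) (l := k)), <- (Tg_aff (k := k) (l := m - k)), Hmid.
  - reflexivity.
  - apply lenW_lift_word; [assumption | unfold Q2; rewrite length_alt; lia].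
  - apply lenW_lift_word_inv; [assumption | apply length_alt].
  - rewrite <- Hmid, Nat.add_comm. exact Hlen.
  - apply lenW_lift_word_inv; [assumption | apply length_alt].
  - apply lenW_lift_word; [assumption | apply length_alt].
  - exact Hlen.
Qed.

Lemma pi_conj_ker t x : pi t = gone -> pi (ginv x * t * x) = gone.
Proof. intro Ht. pisimpl. rewrite Ht. gsimpl. reflexivity. Qed.

Lemma pi_n_sq c : pi (n c * n c) = gone.
Proof. now rewrite pi_mul, pi_n, <- iota_mul, (s_sq Hcox), iota_one. Qed.

Lemma T_sign_comm_ker t e c : pi t = gone ->
  Tg t * T_sign e c = T_sign e c * Tg (ginv (n c) * t * n c).
Proof.
  intro Ht. pose proof (pi_conj_ker (n c) Ht) as Ht'. destruct e; unfold T_sign.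
  - rewrite <- (Tg_mul_Omegal (n c) (Omega_pi_ker Ht)),
      <- (Tg_mul_Omegar (n c) (Omega_pi_ker Ht')).
    f_equal. gsimpl. reflexivity.
  - apply mulgV_eq_mulVg.
    rewrite <- (Tg_mul_Omegar (ginv (n c)) (Omega_pi_ker Ht)),
      <- (Tg_mul_Omegal (ginv (n c)) (Omega_pi_ker Ht')).
    f_equal. gsimpl. reflexivity.
Qed.

Lemma theta_word_comm_ker L : forall o t, pi t = gone ->
  Tg t * theta_word o L = theta_word o L * Tg (ginv (lift_word L) * t * lift_word L).
Proof.
  induction L as [|c L IH]; intros o t Ht; simpl.
  - rewrite lift_word_nil. gsimpl. reflexivity.
  - rewrite gmulA, T_sign_comm_ker, <- gmulA, IH by (try apply pi_conj_ker; assumption).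
    rewrite lift_word_cons. gsimpl. reflexivity.
Qed.

Lemma theta_word_comm_ker_inv L o t : pi t = gone ->
  ginv (Tg t) * theta_word o L =
  theta_word o L * ginv (Tg (ginv (lift_word L) * t * lift_word L)).
Proof.
  intro Ht. apply (mulgI (x := Tg t)).
  rewrite gmulA, mulgV, gmul1g, gmulA, theta_word_comm_ker by exact Ht. gsimpl. reflexivity.
Qed.

Definition is_ori (o : W1 -> Sg -> bool) : Prop := is_orientation_W1 s iota Omega pi o.

Definition ori_data (o : W1 -> Sg -> bool) (O : W -> Sg -> bool) (oa : Waff -> Sg -> bool) :=
  is_orientation_aff s oa /\
  (forall a u x y, Omega u -> iota (s y) = u * iota (s x) * ginv u -> O (iota a * u) x = oa a y) /\
  (forall w x, o w x = O (pi w) x).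

Lemma is_ori_data o : is_ori o -> exists O oa, ori_data o O oa.
Proof. intros [O [[oa [H1 H2]] H3]]. now exists O, oa. Qed.

Lemma orient_act_act (o : W1 -> Sg -> bool) y z :
  orient_act (orient_act o y) z = orient_act o (y * z).
Proof.
  unfold orient_act. apply functional_extensionality; intro w'. now rewrite gmulA.
Qed.

Lemma orient_act_1 (o : W1 -> Sg -> bool) : orient_act o gone = o.
Proof.
  unfold orient_act. do 2 (apply functional_extensionality; intro). now rewrite gmul1g.
Qed.

Definition lift_aff (b : Waff) : W1 :=
  match excluded_middle_informative (b = gone) with
  | left _ => gone
  | right _ => proj1_sig (constructive_indefinite_description _ (pi_surj (iota b)))
  end.

Lemma pi_lift_aff b : pi (lift_aff b) = iota b.
Proof.
  unfold lift_aff. destruct excluded_middle_informative as [->|_].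
  - now rewrite pi_one, iota_one.
  - apply proj2_sig.
Qed.

Lemma lift_aff1 : lift_aff gone = gone.
Proof. unfold lift_aff. destruct excluded_middle_informative; congruence. Qed.

Section FixedOrientation.
Variables (o : W1 -> Sg -> bool) (O : W -> Sg -> bool) (oa : Waff -> Sg -> bool).
Hypothesis Ho : ori_data o O oa.

Lemma orient_act_pi y1 y2 : pi y1 = pi y2 -> orient_act o y1 = orient_act o y2.
Proof.
  destruct Ho as [_ [_ Ho_pi]]. intro E. unfold orient_act.
  do 2 (apply functional_extensionality; intro). now rewrite !Ho_pi, !pi_mul, E.
Qed.

Lemma ori_iota y w x : pi y = iota w -> o y x = oa w x.
Proof.
  destruct Ho as [_ [HO Ho_pi]]. intro E. rewrite Ho_pi, E, <- (mulg1 (iota w)).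
  apply HO; [apply Omega1 | gsimpl; reflexivity].
Qed.

Lemma theta_word_alt j : forall a b y w, pi y = iota w ->
  theta_word (orient_act o y) (alt a b j) =
  signed_word (fun i => oa (w * word_val s (alt a b i)) (alt_letter a b i)) (alt a b j).
Proof.
  induction j as [|j IH]; intros a b y w E; [reflexivity|]. simpl. f_equal.
  - unfold orient_act. rewrite word_val_nil, !mulg1. f_equal. apply ori_iota, E.
  - rewrite orient_act_act, (IH b a (y * n a) (w * s a)).
    + apply signed_word_ext. intros i _. rewrite word_val_cons, gmulA, alt_letter_S. reflexivity.
    + now rewrite pi_mul, E, pi_n, iota_mul.
Qed.

Lemma theta_word_braid y w a b m : pi y = iota w -> order_is (s a * s b) m ->
  theta_word (orient_act o y) (alt a b m) = theta_word (orient_act o y) (alt b a m).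
Proof.
  intros E Hm. rewrite (theta_word_alt m a b E), (theta_word_alt m b a E).
  destruct Ho as [[_ OR2] _]. specialize (OR2 a b m w Hm). simpl in OR2.
  destruct OR2 as [k [Hk [[H1 H2]|[H1 H2]]]].
  - rewrite (@signed_word_split _ _ k (fun e => e)), (@signed_word_split _ _ (m - k) negb).
    + now apply T_word_braid.
    + intros i Hi. rewrite length_alt in Hi. now apply H2.
    + intros i Hi. rewrite length_alt in Hi. now apply H1.
  - rewrite (@signed_word_split _ _ k negb), (@signed_word_split _ _ (m - k) (fun e => e)).
    + symmetry. rewrite T_word_braid by (auto using order_is_swap, s_sq; lia).
      now replace (m - (m - k)) with k by lia.
    + intros i Hi. rewrite length_alt in Hi. now apply H2.
    + intros i Hi. rewrite length_alt in Hi. now apply H1.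
Qed.

Lemma theta_word_ss y w c : pi y = iota w ->
  theta_word (orient_act o y) [c; c] = Tg (n c * n c).
Proof.
  intro E. simpl. unfold orient_act.
  rewrite (ori_iota (w := w)) by (now rewrite pi_mul, pi_one, mulg1).
  rewrite (ori_iota (w := w * s c)) by (now rewrite !pi_mul, pi_one, mulg1, pi_n, E, iota_mul).
  destruct Ho as [[OR1 _] _]. rewrite OR1, mulg1.
  destruct (oa w c); unfold T_sign; simpl.
  - replace (Tg (n c)) with (Tg (n c * n c * ginv (n c))) by (f_equal; apply mulgK).
    rewrite Tg_mul_Omegal by apply Omega_pi_ker, pi_n_sq. gsimpl. reflexivity.
  - replace (Tg (n c)) with (Tg (ginv (n c) * (n c * n c))) by (f_equal; gsimpl; reflexivity).
    rewrite Tg_mul_Omegar by apply Omega_pi_ker, pi_n_sq. gsimpl. reflexivity.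
Qed.

(* Following a word from [b], the [A]-component accumulates [theta_word] (see
   [word_steps_eq]); the correction factor makes each step an involution. *)
Definition word_step (c : Sg) (fb : A * Waff) : A * Waff :=
  let (f, b) := fb in
  (f * T_sign (orient_act o (lift_aff b) gone c) c
     * ginv (Tg (ginv (lift_aff (b * s c)) * lift_aff b * n c)),
   b * s c).

Definition word_steps (L : list Sg) (fb : A * Waff) : A * Waff :=
  fold_left (fun x c => word_step c x) L fb.

Lemma word_steps_eq L : forall f b, word_steps L (f, b) =
  (f * theta_word (orient_act o (lift_aff b)) L
     * ginv (Tg (ginv (lift_aff (b * word_val s L)) * lift_aff b * lift_word L)),
   b * word_val s L).
Proof.
  induction L as [|c L IH]; intros f b; simpl.
  - rewrite word_val_nil, lift_word_nil, !mulg1. gsimpl. now rewrite Tg1, invg1, mulg1.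
  - rewrite IH, word_val_cons, lift_word_cons, !gmulA. f_equal.
    set (t := ginv (lift_aff (b * s c)) * lift_aff b * n c).
    assert (Ht : pi t = gone)
      by (unfold t; pisimpl; rewrite !pi_lift_aff; pisimpl; gsimpl; reflexivity).
    replace (orient_act o (lift_aff (b * s c))) with (orient_act o (lift_aff b * n c))
      by (apply orient_act_pi; now rewrite pi_mul, !pi_lift_aff, pi_n, iota_mul).
    rewrite <- orient_act_act, <- !gmulA. do 2 f_equal.
    rewrite gmulA, theta_word_comm_ker_inv, <- gmulA by exact Ht. f_equal.
    rewrite <- invMg, <- Tg_mul_Omegar by (apply Omega_pi_ker, pi_conj_ker, Ht). f_equal.
    unfold t. gsimpl. reflexivity.
Qed.

Lemma word_stepK c x : word_step c (word_step c x) = x.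
Proof.
  destruct x as [f b]. change (word_step c (word_step c (f, b))) with (word_steps [c; c] (f, b)).
  rewrite word_steps_eq, (theta_word_ss c (pi_lift_aff b)).
  replace (word_val s [c; c]) with (gone : Waff)
    by (symmetry; rewrite !word_val_cons, word_val_nil, mulg1; apply (s_sq Hcox c)).
  rewrite !mulg1, !lift_word_cons, lift_word_nil, mulg1. gsimpl. reflexivity.
Qed.

Lemma word_steps_braid a b m x : order_is (s a * s b) m ->
  word_steps (alt a b m) x = word_steps (alt b a m) x.
Proof.
  intro Hm. destruct x as [f b0]. rewrite !word_steps_eq, (word_val_braid Hcox Hm).
  replace (lift_word (alt a b m)) with (lift_word (alt b a m)) by (symmetry; now apply n_braid).
  now rewrite (theta_word_braid (pi_lift_aff b0) Hm).
Qed.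

Definition word_perm c : Sym (A * Waff) := involution_perm (word_stepK c).

Lemma word_perm_word L x : perm_fun (prodl (map word_perm L)) x = word_steps L x.
Proof. revert x; induction L; intros; simpl; auto. Qed.

Lemma word_rep : exists g : Waff -> Sym (A * Waff), is_hom g /\ forall c, g (s c) = word_perm c.
Proof.
  destruct Hcox as [_ [_ [_ U]]]. apply U.
  - intro c. apply involution_perm_sq.
  - intros a b m Hm. apply gpow_eq1_braid; try apply involution_perm_sq.
    rewrite <- !(map_alt word_perm). apply perm_ext. intro x.
    rewrite !word_perm_word. now apply word_steps_braid.
Qed.

Lemma theta_word_indep L1 L2 : word_val s L1 = word_val s L2 ->
  theta_word o L1 * Tg (ginv (lift_word L1) * lift_word L2) = theta_word o L2.
Proof.
  intro E. destruct word_rep as [g [Hg Hs]].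
  pose proof (f_equal (fun p => fst (perm_fun p (gone, gone))) (f_equal g E)) as Q. simpl in Q.
  rewrite !(hom_word_val Hg Hs), !word_perm_word, !word_steps_eq, lift_aff1, orient_act_1 in Q.
  simpl in Q.
  rewrite !gmul1g, !mulg1, E in Q.
  set (t := ginv (lift_aff (word_val s L2))) in Q.
  assert (Hsplit : Tg (t * lift_word L2) =
                   Tg (t * lift_word L1) * Tg (ginv (lift_word L1) * lift_word L2)).
  { rewrite <- Tg_mul_Omegar.
    - f_equal. gsimpl. reflexivity.
    - apply Omega_pi_ker. pisimpl. rewrite E. gsimpl. reflexivity. }
  apply (mulIg (x := ginv (Tg (t * lift_word L2)))). rewrite <- Q, Hsplit. gsimpl.
  reflexivity.
Qed.

End FixedOrientation.

Lemma is_ori_act_n o c : is_ori o -> is_ori (orient_act o (n c)).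
Proof.
  intro Ho. destruct (is_ori_data Ho) as [O [oa [[OR1 OR2] [HO Ho_pi]]]].
  exists (fun z x => O (iota (s c) * z) x). split.
  - exists (fun a y => oa (s c * a) y). split; [split|].
    + intros w a. simpl. rewrite gmulA. apply OR1.
    + intros a b m w Hm. specialize (OR2 a b m (s c * w) Hm). simpl in OR2 |- *.
      destruct OR2 as [k [Hk Hc]]. exists k. split; auto.
      destruct Hc as [[Q1 Q2]|[Q1 Q2]]; [left|right]; split; intros i Hi; rewrite gmulA; auto.
    + intros a u x y Hu E. simpl. rewrite gmulA, <- iota_mul. now apply HO.
  - intros w x. unfold orient_act. now rewrite Ho_pi, pi_mul, pi_n.
Qed.

Lemma ori_conj o O oa w0 v x : ori_data o O oa -> Omega (pi v) ->
  o (w0 * v) x = o w0 (conj_gen (pi v) x).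
Proof.
  intros [_ [HO Ho_pi]] Hv. rewrite !Ho_pi, pi_mul.
  destruct (Omega_decomp (pi w0)) as [c [u0 [Hu0 ->]]].
  destruct (Omega_conj_s x (OmegaM Hu0 Hv)) as [y1 Hy1].
  destruct (Omega_conj_s (conj_gen (pi v) x) Hu0) as [y2 Hy2].
  rewrite <- gmulA, (HO c (u0 * pi v) x y1), (HO c u0 (conj_gen (pi v) x) y2); auto.
  - f_equal. apply s_inj, iota_inj. rewrite <- Hy1, <- Hy2, iota_s_conj_gen by exact Hv.
    gsimpl. reflexivity.
  - now apply OmegaM.
Qed.

Lemma T_sign_comm_Omega v e x : Omega (pi v) ->
  Tg v * T_sign e x =
  T_sign e (conj_gen (pi v) x) * Tg (ginv (n (conj_gen (pi v) x)) * v * n x).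
Proof.
  intro Hv. set (y := conj_gen (pi v) x). set (z := ginv (n y) * v * n x).
  assert (Hz : Omega (pi z)).
  { unfold z, y. pisimpl. rewrite iota_s_conj_gen by exact Hv. gsimpl. exact Hv. }
  destruct e; unfold T_sign.
  - rewrite <- (Tg_mul_Omegal (n x) Hv), <- (Tg_mul_Omegar (n y) Hz). f_equal.
    unfold z. gsimpl. reflexivity.
  - apply mulgV_eq_mulVg.
    rewrite <- (Tg_mul_Omegar (ginv (n y)) Hv), <- (Tg_mul_Omegal (ginv (n x)) Hz). f_equal.
    unfold z. gsimpl. reflexivity.
Qed.

Lemma pi_conj_word L v : Omega (pi v) ->
  pi (ginv (lift_word (map (conj_gen (pi v)) L)) * v * lift_word L) = pi v.
Proof. intro Hv. pisimpl. rewrite iota_word_val_conj_gen by exact Hv. gsimpl. reflexivity. Qed.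

Lemma theta_word_comm_Omega o O oa L : ori_data o O oa -> forall w0 v, Omega (pi v) ->
  Tg v * theta_word (orient_act o (w0 * v)) L =
  theta_word (orient_act o w0) (map (conj_gen (pi v)) L)
    * Tg (ginv (lift_word (map (conj_gen (pi v)) L)) * v * lift_word L).
Proof.
  intro D. induction L as [|x L IH]; intros w0 v Hv; simpl.
  - rewrite lift_word_nil. gsimpl. reflexivity.
  - set (y := conj_gen (pi v) x). set (z := ginv (n y) * v * n x).
    assert (Hz : pi z = pi v).
    { rewrite <- (pi_conj_word [x] Hv). unfold z, lift_word. simpl. now rewrite !mulg1. }
    replace (orient_act o (w0 * v) gone x) with (orient_act o w0 gone y)
      by (unfold orient_act; rewrite !mulg1; symmetry; exact (ori_conj _ _ D Hv)).
    rewrite gmulA, T_sign_comm_Omega, <- gmulA, !orient_act_act by exact Hv. fold y z.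
    replace (w0 * v * n x) with (w0 * n y * z) by (unfold z; gsimpl; reflexivity).
    rewrite IH, Hz by (rewrite Hz; exact Hv). rewrite !lift_word_cons, gmulA.
    unfold z. gsimpl. reflexivity.
Qed.

Lemma theta_word_app L1 : forall L2 o,
  theta_word o (L1 ++ L2) = theta_word o L1 * theta_word (orient_act o (lift_word L1)) L2.
Proof.
  induction L1 as [|c L1 IH]; intros L2 o; simpl.
  - now rewrite lift_word_nil, orient_act_1, gmul1g.
  - now rewrite IH, orient_act_act, lift_word_cons, gmulA.
Qed.

(** * The map theta *)

Lemma chosen_word_exists w : exists L, Omega (pi (ginv (lift_word L) * w)).
Proof.
  destruct (Omega_decomp (pi w)) as [a [u [Hu E]]].
  destruct (word_val_surj Hcox a) as [L EL]. exists L.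
  rewrite pi_mul, pi_inv, pi_lift_word, EL, E. gsimpl. exact Hu.
Qed.

Definition chosen_word (w : W1) : list Sg :=
  proj1_sig (constructive_indefinite_description _ (chosen_word_exists w)).

Lemma Omega_chosen_word w : Omega (pi (ginv (lift_word (chosen_word w)) * w)).
Proof. unfold chosen_word. apply proj2_sig. Qed.

Lemma word_val_Omega_uniq L1 L2 w : Omega (pi (ginv (lift_word L1) * w)) ->
  Omega (pi (ginv (lift_word L2) * w)) -> word_val s L1 = word_val s L2.
Proof.
  intros H1 H2. rewrite pi_mul, pi_inv, pi_lift_word in H1, H2.
  apply (Omega_decomp_uniq H1 H2). gsimpl. reflexivity.
Qed.

Definition theta (w : W1) (o : W1 -> Sg -> bool) : A :=
  theta_word o (chosen_word w) * Tg (ginv (lift_word (chosen_word w)) * w).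

Lemma theta_any_word L w o : is_ori o -> Omega (pi (ginv (lift_word L) * w)) ->
  theta w o = theta_word o L * Tg (ginv (lift_word L) * w).
Proof.
  intros Ho HL. destruct (is_ori_data Ho) as [O [oa D]].
  assert (E : word_val s (chosen_word w) = word_val s L)
    by exact (word_val_Omega_uniq (Omega_chosen_word w) HL).
  rewrite <- (theta_word_indep D E), <- gmulA, <- Tg_mul_Omegal.
  - unfold theta. f_equal. f_equal. gsimpl. reflexivity.
  - pisimpl. rewrite E. gsimpl. apply Omega1.
Qed.

Lemma theta_cocycle w w' o : is_ori o ->
  theta (w * w') o = theta w o * theta w' (orient_act o w).
Proof.
  intro Ho. destruct (is_ori_data Ho) as [O [oa D]].
  set (L := chosen_word w). set (L' := chosen_word w').
  set (v := ginv (lift_word L) * w).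
  set (L'' := map (conj_gen (pi v)) L').
  assert (Hv : Omega (pi v)) by apply Omega_chosen_word.
  assert (Hv' : Omega (pi (ginv (lift_word L') * w'))) by apply Omega_chosen_word.
  assert (Hz := pi_conj_word L' Hv). fold L'' in Hz.
  unfold theta at 2 3. fold L L' v.
  replace (orient_act o w) with (orient_act o (lift_word L * v))
    by (unfold v; f_equal; gsimpl; reflexivity).
  rewrite <- gmulA, (gmulA (Tg v)), (theta_word_comm_Omega L' D _ Hv). fold L''.
  rewrite <- gmulA, <- Tg_mul_Omegal by (rewrite Hz; exact Hv).
  rewrite gmulA, <- theta_word_app.
  assert (Ew : ginv (lift_word L'') * v * lift_word L' * (ginv (lift_word L') * w') =
               ginv (lift_word (L ++ L'')) * (w * w'))
    by (unfold v; rewrite lift_word_app; gsimpl; reflexivity).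
  rewrite Ew. apply theta_any_word; [exact Ho|].
  rewrite <- Ew, pi_mul, Hz. now apply OmegaM.
Qed.

Lemma theta_n x o : is_ori o -> theta (n x) o = T_sign (o gone x) x.
Proof.
  intro Ho. rewrite (@theta_any_word [x]); auto.
  - simpl. rewrite lift_word_cons, lift_word_nil. gsimpl. rewrite Tg1. apply mulg1.
  - rewrite lift_word_cons, lift_word_nil. gsimpl. apply Omega_pi_ker, pi_one.
Qed.

Lemma theta_Omega u o : Omega (pi u) -> is_ori o -> theta u o = Tg u.
Proof.
  intros Hu Ho. rewrite (@theta_any_word []); auto.
  - simpl. now rewrite lift_word_nil, invg1, !gmul1g.
  - now rewrite lift_word_nil, invg1, gmul1g.
Qed.

Lemma theta_spec_theta : theta_spec s iota Omega pi n Tg theta.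
Proof.
  split; [|split].
  - intros w w' o Ho. now apply theta_cocycle.
  - intros x o Ho. now apply theta_n.
  - intros u o Hu Ho. now apply theta_Omega.
Qed.

Lemma theta_spec_eq_theta_word th : theta_spec s iota Omega pi n Tg th ->
  forall L w o, is_ori o -> Omega (pi (ginv (lift_word L) * w)) ->
  th w o = theta_word o L * Tg (ginv (lift_word L) * w).
Proof.
  intros [Hcoc [Hn HOmega]] L. induction L as [|c L IH]; intros w o Ho HL.
  - rewrite lift_word_nil, invg1, gmul1g in *. simpl. rewrite gmul1g. now apply HOmega.
  - replace w with (n c * (ginv (n c) * w)) at 1 by (gsimpl; reflexivity).
    rewrite Hcoc, Hn, IH
      by (auto using is_ori_act_n; now rewrite lift_word_cons, invMg, <- gmulA in HL).
    simpl. rewrite lift_word_cons. gsimpl. reflexivity.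
Qed.

Lemma theta_spec_unique th : theta_spec s iota Omega pi n Tg th ->
  forall w o, is_ori o -> th w o = theta w o.
Proof.
  intros Hth w o Ho. rewrite (theta_spec_eq_theta_word Hth (L := chosen_word w)) by
    (auto using Omega_chosen_word).
  reflexivity.
Qed.

End ProPCoxeter.

Theorem theorem2p6p1 (Waff W W1 : group) (S : Type) (s : S -> Waff)
    (iota : Waff -> W) (Omega : W -> Prop) (pi : W1 -> W) (n : S -> W1)
    (Hpro : is_pro_p_coxeter s iota Omega pi n)
    (A : group) (Tg : W1 -> A) (HA : is_Aff_presentation s iota Omega pi Tg) :
  exists theta : W1 -> (W1 -> S -> bool) -> A,
    theta_spec s iota Omega pi n Tg theta /\
    forall theta' : W1 -> (W1 -> S -> bool) -> A,
      theta_spec s iota Omega pi n Tg theta' ->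
      forall (w : W1) (o : W1 -> S -> bool),
        is_orientation_W1 s iota Omega pi o -> theta' w o = theta w o.
Proof.
  exists (theta Tg Hpro). split.
  - exact (theta_spec_theta Hpro HA).
  - exact (theta_spec_unique Hpro).
Qed.
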